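(* Let $L>0$, $D>0$, $s_0\ge0$, $X=[-D/2,D/2]$, and consider the class of problems $\min_{x\in X}g_{t,d,s}(x)$ indexed by $t\ne0$ with $|t|<\frac12L^{1/2}[2(D+s_0)]^{-1/2}$, $d=D/2$ if $t>0$ and $d=-D/2$ if $t<0$, $s=s_0$, where $f_{t,d,s}(x)=t(d-x)$, $\alpha=|t|^{4/3}L^{-2/3}[2(D+s)]^{2/3}$, the stochastic first-order oracle returns $(F_{t,d,s}(x,\xi),F'_{t,d,s}(x,\xi))=\big(-\frac{|t|s}{2(1-\alpha)},0\big)$ with probability $1-\alpha$ and $\frac1\alpha\big(f_{t,d,s}(x)+\frac{|t|s}2,f'_{t,d,s}(x)\big)$ with probability $\alpha$, and $g_{t,d,s}(x)=\mathbb{E}[(F_{t,d,s}(x,\xi)-f_{t,d,s}(x))_+^2]$. Then any method with a deterministic rule for the sample trajectories requires at least $N\ge\Omega(L^2D^2\epsilon^{-2})$ oracle samples to find an $\epsilon$-optimal solution for this class of problems $\min_{x\in X}g_{t,d,s}(x)$.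
   Context: $(a)_+=\max\{a,0\}$. A point $\tilde x$ is $\epsilon$-optimal for $\min_Xg$ if $\mathbb{E}[g(\tilde x)]-\min_Xg\le\epsilon$. A method with a deterministic rule for the sample trajectories sequentially queries the oracle from a given initial point, each query point and the output being deterministic functions of the initial point and the oracle answers received so far; it is required to succeed on every problem of the class. *)

From Stdlib Require Import Reals Lra List.
Open Scope R_scope.
Import ListNotations.

Definition pospart (a : R) : R := Rmax a 0.

Definition dpar (D t : R) : R := if Rlt_dec 0 t then D / 2 else - (D / 2).

Definition alpha_par (L D s t : R) : R :=
  Rpower (Rabs t) (4/3) * Rpower L (-(2/3)) * Rpower (2 * (D + s)) (2/3).

Definition f_tds (t d : R) (x : R) : R := t * (d - x).
Definition df_tds (t : R) (x : R) : R := - t.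

(* Oracle answer: xi = false (probability 1 - alpha) and xi = true (probability alpha) *)
Definition oracle (t d s a : R) (x : R) (xi : bool) : R * R :=
  if xi then ((f_tds t d x + Rabs t * s / 2) / a, df_tds t x / a)
  else (- (Rabs t * s) / (2 * (1 - a)), 0).

Definition g_tds (t d s a : R) (x : R) : R :=
  (1 - a) * (pospart (fst (oracle t d s a x false) - f_tds t d x)) ^ 2
  + a * (pospart (fst (oracle t d s a x true) - f_tds t d x)) ^ 2.

(* Sample trajectory of a deterministic method: the query rule [q] maps the
   oracle answers received so far to the next query point (q [] is the initial
   point); [bs] is the sequence of i.i.d. oracle samples xi_1, ..., xi_N. *)
Fixpoint traj (q : list (R * R) -> R) (orc : R -> bool -> R * R)
    (hist : list (R * R)) (bs : list bool) : list (R * R) :=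
  match bs with
  | nil => hist
  | b :: bs' => traj q orc (hist ++ [orc (q hist) b]) bs'
  end.

Fixpoint expect (N : nat) (a : R) (F : list bool -> R) : R :=
  match N with
  | O => F nil
  | S n => a * expect n a (fun bs => F (true :: bs))
           + (1 - a) * expect n a (fun bs => F (false :: bs))
  end.

From Stdlib Require Import Reals Lra List.
Open Scope R_scope.

(* On the sample path where every answer is the likely one (xi = false), the
   oracles of the problems t = T and t = -T coincide, since they depend on t only
   through |t|; so a deterministic method returns the same point for both, and for
   one of the two problems that point lies in the wrong half of X, where the
   optimality gap is at least (1 - alpha)^2 T^2 D (D + s) / (4 alpha).  This path
   has probability (1 - alpha)^N.  Taking alpha = r^2 with r = 1 / (2 sqrt (N + 1))
   makes that probability at least 1/2, and the definition of alpha forces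
   T^2 = r^3 L / (2 (D + s)), so the gap is r L D / 8 up to the factor (1 - alpha)^2,
   whence eps >= L D / (32 sqrt (N + 1)). *)

Lemma pospart_le0 (x : R) : x <= 0 -> pospart x = 0.
Proof. exact (Rmax_right x 0). Qed.

Lemma pospart_ge0 (x : R) : 0 <= x -> pospart x = x.
Proof. exact (Rmax_left x 0). Qed.

Lemma g_tds_gap (t d s a x : R) :
  0 < a < 1 -> 0 <= s -> 0 <= f_tds t d x ->
  g_tds t d s a x - g_tds t d s a d
  = (1 - a) * f_tds t d x * ((1 - a) * f_tds t d x + Rabs t * s) / a.
Proof.
  intros Ha Hs Hf.
  assert (Hd : f_tds t d d = 0) by (unfold f_tds; ring).
  assert (Hts : 0 <= Rabs t * s) by (apply Rmult_le_pos; [apply Rabs_pos | lra]).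
  assert (Hlow : forall f, 0 <= f -> - (Rabs t * s) / (2 * (1 - a)) - f <= 0).
  { intros f Hf0. assert (0 <= Rabs t * s / (2 * (1 - a))).
    { apply Rmult_le_pos; [lra | apply Rlt_le, Rinv_0_lt_compat; lra]. }
    unfold Rdiv in *. lra. }
  assert (Hhigh : forall f, (f + Rabs t * s / 2) / a - f = ((1 - a) * f + Rabs t * s / 2) / a)
    by (intros f; field; lra).
  assert (Hhigh0 : forall f, 0 <= f -> 0 <= ((1 - a) * f + Rabs t * s / 2) / a).
  { intros f Hf0. apply Rmult_le_pos; [nra | apply Rlt_le, Rinv_0_lt_compat; lra]. }
  unfold g_tds, oracle; simpl. rewrite Hd.
  rewrite !Hhigh, (pospart_le0 _ (Hlow _ Hf)), (pospart_le0 _ (Hlow 0 (Rle_refl 0))),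
    !pospart_ge0 by auto using Rle_refl.
  field. lra.
Qed.

Lemma g_tds_gap_ge (t d s a D x : R) :
  0 < a < 1 -> 0 <= s -> 0 <= D -> Rabs t * D / 2 <= f_tds t d x ->
  (1 - a) ^ 2 * t ^ 2 * D * (D + s) / (4 * a) <= g_tds t d s a x - g_tds t d s a d.
Proof.
  intros Ha Hs HD Hf.
  assert (HtD : 0 <= Rabs t * D / 2) by (pose proof (Rabs_pos t); nra).
  rewrite g_tds_gap, <- (pow2_abs t) by lra.
  set (f := f_tds t d x) in *.
  assert (Hprod : (1 - a) * (Rabs t * D / 2) * ((1 - a) * (Rabs t * D / 2) + (1 - a) * Rabs t * s)
                  <= (1 - a) * f * ((1 - a) * f + Rabs t * s)).
  { pose proof (Rabs_pos t).
    assert (0 <= Rabs t * s) by (apply Rmult_le_pos; lra).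
    assert (0 <= (1 - a) * (Rabs t * D / 2)) by (apply Rmult_le_pos; lra).
    apply Rmult_le_compat; nra. }
  assert (Hs' : 0 <= (1 - a) ^ 2 * Rabs t ^ 2 * D * s).
  { apply Rmult_le_pos; [| lra]. apply Rmult_le_pos; [| lra].
    apply Rmult_le_pos; apply pow_le; [lra | apply Rabs_pos]. }
  replace ((1 - a) ^ 2 * Rabs t ^ 2 * D * (D + s) / (4 * a))
    with ((1 - a) ^ 2 * Rabs t ^ 2 * D * (D + s) / 4 * / a) by (field; lra).
  apply Rmult_le_compat_r; [apply Rlt_le, Rinv_0_lt_compat; lra |].
  nra.
Qed.

Lemma expect_subr (N : nat) (a C : R) (F : list bool -> R) :
  expect N a (fun bs => F bs - C) = expect N a F - C.
Proof.
  revert F; induction N as [| n IH]; intros F; simpl; [reflexivity |].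
  rewrite (IH (fun bs => F (true :: bs))), (IH (fun bs => F (false :: bs))). ring.
Qed.

Lemma expect_ge0 (N : nat) (a : R) (F : list bool -> R) :
  0 <= a <= 1 -> (forall bs, length bs = N -> 0 <= F bs) -> 0 <= expect N a F.
Proof.
  revert F; induction N as [| n IH]; intros F Ha HF; simpl; [now apply HF |].
  assert (0 <= expect n a (fun bs => F (true :: bs)))
    by (apply IH; [lra | intros bs Hbs; apply HF; simpl; now rewrite Hbs]).
  assert (0 <= expect n a (fun bs => F (false :: bs)))
    by (apply IH; [lra | intros bs Hbs; apply HF; simpl; now rewrite Hbs]).
  nra.
Qed.

Lemma expect_ge_repeat_false (N : nat) (a : R) (F : list bool -> R) :
  0 <= a <= 1 -> (forall bs, length bs = N -> 0 <= F bs) ->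
  (1 - a) ^ N * F (repeat false N) <= expect N a F.
Proof.
  revert F; induction N as [| n IH]; intros F Ha HF; simpl; [lra |].
  assert (0 <= expect n a (fun bs => F (true :: bs)))
    by (apply expect_ge0; [lra | intros bs Hbs; apply HF; simpl; now rewrite Hbs]).
  assert ((1 - a) ^ n * F (false :: repeat false n) <= expect n a (fun bs => F (false :: bs)))
    by (apply (IH (fun bs => F (false :: bs))); [lra | intros bs Hbs; apply HF; simpl; now rewrite Hbs]).
  nra.
Qed.

Lemma traj_repeat_false (q : list (R * R) -> R) (o1 o2 : R -> bool -> R * R)
    (hist : list (R * R)) (N : nat) :
  (forall x, o1 x false = o2 x false) ->
  traj q o1 hist (repeat false N) = traj q o2 hist (repeat false N).
Proof.
  intros Ho; revert hist; induction N as [| n IH]; intros hist; simpl; [reflexivity |].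
  rewrite Ho. apply IH.
Qed.

Lemma pow_1_sub_ge (a : R) (n : nat) : 0 <= a <= 1 -> 1 - INR n * a <= (1 - a) ^ n.
Proof.
  intros Ha; induction n as [| n IH]; [simpl; lra |].
  rewrite S_INR, <- tech_pow_Rmult.
  assert (0 <= INR n) by apply pos_INR.
  assert ((1 - a) * (1 - INR n * a) <= (1 - a) * (1 - a) ^ n) by (apply Rmult_le_compat_l; lra).
  nra.
Qed.

Definition solves (N : nat) (q out : list (R * R) -> R) (D s t a eps : R) : Prop :=
  let d := dpar D t in
  (forall bs : list bool, length bs = N ->
     - (D / 2) <= out (traj q (oracle t d s a) nil bs) <= D / 2) /\
  (forall y : R, - (D / 2) <= y <= D / 2 ->
     expect N a (fun bs => g_tds t d s a (out (traj q (oracle t d s a) nil bs)))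
       - g_tds t d s a y <= eps).

Lemma expect_gap_ge (t d s a D eps : R) (N : nat) (x : list bool -> R) :
  0 < a < 1 -> 0 <= s -> 0 <= D ->
  (forall bs, length bs = N -> 0 <= f_tds t d (x bs)) ->
  Rabs t * D / 2 <= f_tds t d (x (repeat false N)) ->
  expect N a (fun bs => g_tds t d s a (x bs)) - g_tds t d s a d <= eps ->
  (1 - a) ^ N * ((1 - a) ^ 2 * t ^ 2 * D * (D + s) / (4 * a)) <= eps.
Proof.
  intros Ha Hs HD Hx Hbad Heps.
  rewrite <- expect_subr in Heps.
  assert (Hgap : forall bs, length bs = N -> 0 <= g_tds t d s a (x bs) - g_tds t d s a d).
  { intros bs Hbs. specialize (Hx bs Hbs).
    rewrite g_tds_gap by lra.
    assert (0 <= Rabs t * s) by (apply Rmult_le_pos; [apply Rabs_pos | lra]).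
    apply Rmult_le_pos; [| apply Rlt_le, Rinv_0_lt_compat; lra].
    apply Rmult_le_pos; [apply Rmult_le_pos |]; nra. }
  pose proof (expect_ge_repeat_false N a _ ltac:(lra) Hgap) as Hexp.
  pose proof (g_tds_gap_ge t d s a D (x (repeat false N)) Ha Hs HD Hbad).
  assert (0 <= (1 - a) ^ N) by (apply pow_le; lra).
  nra.
Qed.

Lemma two_point_gap_ge (N : nat) (q out : list (R * R) -> R) (D s T a eps : R) :
  0 < T -> 0 < a < 1 -> 0 <= s -> 0 < D ->
  solves N q out D s T a eps -> solves N q out D s (- T) a eps ->
  (1 - a) ^ N * ((1 - a) ^ 2 * T ^ 2 * D * (D + s) / (4 * a)) <= eps.
Proof.
  intros HT Ha Hs HD [Hin1 Heps1] [Hin2 Heps2].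
  assert (Hd1 : dpar D T = D / 2) by (unfold dpar; destruct (Rlt_dec 0 T); lra).
  assert (Hd2 : dpar D (- T) = - (D / 2)) by (unfold dpar; destruct (Rlt_dec 0 (- T)); lra).
  simpl in Hin1, Heps1, Hin2, Heps2.
  rewrite Hd1 in Hin1, Heps1. rewrite Hd2 in Hin2, Heps2.
  assert (Hsame : traj q (oracle T (D / 2) s a) nil (repeat false N)
                  = traj q (oracle (- T) (- (D / 2)) s a) nil (repeat false N)).
  { apply traj_repeat_false. intros y. unfold oracle. now rewrite Rabs_Ropp. }
  set (xbar := out (traj q (oracle T (D / 2) s a) nil (repeat false N))).
  assert (Hxbar : - (D / 2) <= xbar <= D / 2) by apply Hin1, repeat_length.
  destruct (Rle_dec xbar 0) as [Hneg | Hpos].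
  - apply (expect_gap_ge T (D / 2) s a D eps N (fun bs => out (traj q (oracle T (D / 2) s a) nil bs)));
      try lra.
    + intros bs Hbs. specialize (Hin1 bs Hbs). unfold f_tds. nra.
    + fold xbar. rewrite Rabs_pos_eq by lra. unfold f_tds. nra.
    + apply Heps1. lra.
  - replace (T ^ 2) with ((- T) ^ 2) by ring.
    apply (expect_gap_ge (- T) (- (D / 2)) s a D eps N
             (fun bs => out (traj q (oracle (- T) (- (D / 2)) s a) nil bs))); try lra.
    + intros bs Hbs. specialize (Hin2 bs Hbs). unfold f_tds. nra.
    + rewrite <- Hsame. fold xbar. rewrite Rabs_Ropp, Rabs_pos_eq by lra. unfold f_tds. nra.
    + apply Heps2. lra.
Qed.

Lemma alpha_par_of_sq (L D s t r : R) :
  0 < L -> 0 < D + s -> 0 < r -> t ^ 2 = r ^ 3 * L / (2 * (D + s)) ->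
  alpha_par L D s t = r ^ 2.
Proof.
  intros HL HDs Hr Ht.
  assert (HM : 0 < 2 * (D + s)) by lra.
  assert (Hr3 : 0 < r ^ 3) by (apply pow_lt; lra).
  assert (Habs : 0 < Rabs t).
  { apply Rabs_pos_lt. intros ->.
    assert (0 < r ^ 3 * L / (2 * (D + s))) by (apply Rdiv_lt_0_compat; [apply Rmult_lt_0_compat |]; lra).
    simpl in Ht. lra. }
  assert (Hln : 2 * ln (Rabs t) = 3 * ln r + ln L - ln (2 * (D + s))).
  { assert (0 < r ^ 3 * L) by (apply Rmult_lt_0_compat; lra).
    assert (0 < / (2 * (D + s))) by (apply Rinv_0_lt_compat; lra).
    rewrite <- (pow2_abs t) in Ht. apply (f_equal ln) in Ht. unfold Rdiv in Ht.
    rewrite ln_pow, ln_mult, ln_mult, ln_pow, ln_Rinv in Ht by assumption.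
    simpl in Ht. lra. }
  assert (HRpower : forall x y, 0 < Rpower x y) by (intros; apply exp_pos).
  apply ln_inv.
  - unfold alpha_par. apply Rmult_lt_0_compat; [apply Rmult_lt_0_compat |]; apply HRpower.
  - apply pow_lt; lra.
  - unfold alpha_par.
    rewrite !ln_mult, !ln_Rpower, ln_pow by (try apply Rmult_lt_0_compat; auto).
    simpl INR. lra.
Qed.

Lemma lt_half_sqrt_div (L M T : R) :
  0 < L -> 0 < M -> 0 <= T -> T ^ 2 < L / (4 * M) -> T < / 2 * sqrt L / sqrt M.
Proof.
  intros HL HM HT HT2.
  assert (HsL : 0 < sqrt L) by (apply sqrt_lt_R0; lra).
  assert (HsM : 0 < sqrt M) by (apply sqrt_lt_R0; lra).
  assert (Hsq : (/ 2 * sqrt L / sqrt M) ^ 2 = L / (4 * M)).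
  { replace ((/ 2 * sqrt L / sqrt M) ^ 2) with ((sqrt L * sqrt L) / (4 * (sqrt M * sqrt M)))
      by (field; lra).
    rewrite !sqrt_sqrt; lra. }
  assert (0 < / 2 * sqrt L / sqrt M) by (apply Rdiv_lt_0_compat; lra).
  nra.
Qed.

Lemma error_ge_of_scale (L D s eps r : R) (N : nat) (q out : list (R * R) -> R) :
  0 < L -> 0 < D -> 0 <= s -> 0 < r <= 1 / 2 ->
  (forall t, t <> 0 -> Rabs t < / 2 * sqrt L / sqrt (2 * (D + s)) ->
     solves N q out D s t (alpha_par L D s t) eps) ->
  (1 - r ^ 2) ^ (N + 2) * (r * L * D / 8) <= eps.
Proof.
  intros HL HD Hs Hr Hsolve.
  assert (HM : 0 < 2 * (D + s)) by lra.
  assert (HX : 0 < r ^ 3 * L / (2 * (D + s)))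
    by (apply Rdiv_lt_0_compat; [apply Rmult_lt_0_compat; [apply pow_lt |] |]; lra).
  set (T := sqrt (r ^ 3 * L / (2 * (D + s)))).
  assert (HT : 0 < T) by (apply sqrt_lt_R0; lra).
  assert (HT2 : T ^ 2 = r ^ 3 * L / (2 * (D + s))) by (rewrite <- Rsqr_pow2; apply Rsqr_sqrt; lra).
  assert (HTadm : Rabs T < / 2 * sqrt L / sqrt (2 * (D + s))).
  { rewrite Rabs_pos_eq by lra. apply lt_half_sqrt_div; try lra.
    rewrite HT2. replace (L / (4 * (2 * (D + s)))) with (/ 4 * L / (2 * (D + s))) by (field; lra).
    apply Rmult_lt_compat_r; [apply Rinv_0_lt_compat; lra |].
    assert (r ^ 3 <= / 8) by (simpl; nra). nra. }
  assert (Ha1 : alpha_par L D s T = r ^ 2) by (apply alpha_par_of_sq; lra).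
  assert (Ha2 : alpha_par L D s (- T) = r ^ 2)
    by (apply alpha_par_of_sq; try lra; rewrite <- HT2; ring).
  assert (Hsolve1 := Hsolve T ltac:(lra) HTadm).
  assert (Hsolve2 := Hsolve (- T) ltac:(lra) ltac:(now rewrite Rabs_Ropp)).
  rewrite Ha1 in Hsolve1. rewrite Ha2 in Hsolve2.
  pose proof (two_point_gap_ge N q out D s T (r ^ 2) eps HT ltac:(split; nra) Hs HD
                Hsolve1 Hsolve2) as Hgap.
  rewrite pow_add.
  replace ((1 - r ^ 2) ^ N * (1 - r ^ 2) ^ 2 * (r * L * D / 8))
    with ((1 - r ^ 2) ^ N * ((1 - r ^ 2) ^ 2 * T ^ 2 * D * (D + s) / (4 * r ^ 2)))
    by (rewrite HT2; field; lra).
  exact Hgap.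
Qed.

Lemma error_ge_of_samples (L D s eps : R) (N : nat) (q out : list (R * R) -> R) :
  0 < L -> 0 < D -> 0 <= s ->
  (forall t, t <> 0 -> Rabs t < / 2 * sqrt L / sqrt (2 * (D + s)) ->
     solves N q out D s t (alpha_par L D s t) eps) ->
  L * D / (32 * sqrt (INR N + 1)) <= eps.
Proof.
  intros HL HD Hs Hsolve.
  set (sN := sqrt (INR N + 1)).
  assert (HsN : 1 <= sN)
    by (rewrite <- sqrt_1; apply sqrt_le_1_alt; pose proof (pos_INR N); lra).
  assert (HsN2 : sN * sN = INR N + 1) by (apply sqrt_sqrt; pose proof (pos_INR N); lra).
  set (r := / (2 * sN)).
  assert (Hr : 0 < r <= 1 / 2)
    by (unfold r; split; [apply Rinv_0_lt_compat | rewrite Rdiv_1_l; apply Rinv_le_contravar]; lra).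
  assert (Hr2 : r ^ 2 * (4 * (INR N + 1)) = 1) by (unfold r; rewrite <- HsN2; field; lra).
  assert (Hprob : 1 / 2 <= (1 - r ^ 2) ^ (N + 2)).
  { eapply Rle_trans; [| apply pow_1_sub_ge; split; nra].
    rewrite plus_INR. simpl INR. nra. }
  pose proof (error_ge_of_scale L D s eps r N q out HL HD Hs Hr Hsolve) as Herr.
  replace (L * D / (32 * sN)) with (1 / 2 * (r * L * D / 8)) by (unfold r; field; lra).
  assert (0 < r * L * D / 8) by (apply Rdiv_lt_0_compat; [apply Rmult_lt_0_compat; [apply Rmult_lt_0_compat |] |]; lra).
  nra.
Qed.

Lemma samples_ge_of_error (L D eps : R) (N : nat) :
  0 < eps -> 64 * eps <= L * D -> L * D / (32 * sqrt (INR N + 1)) <= eps ->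
  / 2048 * (L ^ 2 * D ^ 2 / eps ^ 2) <= INR N.
Proof.
  intros Heps Hlow Hup.
  assert (HsN : 0 < sqrt (INR N + 1)) by (apply sqrt_lt_R0; pose proof (pos_INR N); lra).
  assert (HsN2 : sqrt (INR N + 1) * sqrt (INR N + 1) = INR N + 1)
    by (apply sqrt_sqrt; pose proof (pos_INR N); lra).
  assert (HLD : L * D <= 32 * sqrt (INR N + 1) * eps).
  { apply Rmult_le_reg_r with (/ (32 * sqrt (INR N + 1))); [apply Rinv_0_lt_compat; lra |].
    replace (32 * sqrt (INR N + 1) * eps * / (32 * sqrt (INR N + 1))) with eps by (field; lra).
    exact Hup. }
  assert (Hsq : (L * D) ^ 2 <= 1024 * (INR N + 1) * eps ^ 2).
  { rewrite <- HsN2. replace (1024 * (sqrt (INR N + 1) * sqrt (INR N + 1)) * eps ^ 2)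
      with ((32 * sqrt (INR N + 1) * eps) ^ 2) by ring.
    apply pow_incr. lra. }
  assert (Hsq' : (64 * eps) ^ 2 <= (L * D) ^ 2) by (apply pow_incr; lra).
  assert (He2 : 0 < eps ^ 2) by (apply pow_lt; lra).
  assert (HN : 3 <= INR N).
  { apply Rmult_le_reg_r with (1024 * eps ^ 2); [lra |].
    replace ((64 * eps) ^ 2) with (4096 * eps ^ 2) in Hsq' by ring. lra. }
  apply Rmult_le_reg_r with (eps ^ 2); [exact He2 |].
  replace (/ 2048 * (L ^ 2 * D ^ 2 / eps ^ 2) * eps ^ 2) with ((L * D) ^ 2 / 2048) by (field; lra).
  nra.
Qed.

Theorem lemma12 :
  exists c c0 : R, 0 < c /\ 0 < c0 /\
  forall (L D s0 eps : R), 0 < L -> 0 < D -> 0 <= s0 ->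
  0 < eps -> eps <= c0 * L * D ->
  forall (N : nat) (q : list (R * R) -> R) (out : list (R * R) -> R),
  (forall t : R, t <> 0 ->
     Rabs t < / 2 * sqrt L / sqrt (2 * (D + s0)) ->
     let d := dpar D t in
     let a := alpha_par L D s0 t in
     (forall bs : list bool, length bs = N ->
        - (D / 2) <= out (traj q (oracle t d s0 a) nil bs) <= D / 2) /\
     (forall y : R, - (D / 2) <= y <= D / 2 ->
        expect N a (fun bs => g_tds t d s0 a (out (traj q (oracle t d s0 a) nil bs)))
          - g_tds t d s0 a y <= eps)) ->
  c * (L ^ 2 * D ^ 2 / eps ^ 2) <= INR N.
Proof.
  exists (/ 2048), (/ 64). split; [lra |]. split; [lra |].
  intros L D s0 eps HL HD Hs0 Heps Heps_le N q out Hsolve.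
  apply samples_ge_of_error; [exact Heps | lra |].
  exact (error_ge_of_samples L D s0 eps N q out HL HD Hs0 Hsolve).
Qed.
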